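(* Suppose $\mathfrak r$ is an irreducible representation of $H$. Then for every simple ideal $\mathfrak g_i$ of $\mathfrak g$, the projection of $\mathbf a$ onto $\mathfrak g_i$ (with respect to the decomposition of $\mathfrak g$ into simple ideals) is nonzero.
   Context: $G=\mathbf G(\mathbb R)$ where $\mathbf G$ is a connected semisimple $\mathbb Q$-group, with Lie algebra $\mathfrak g$. $\mathbf H\le\mathbf G$ is a connected semisimple $\mathbb R$-subgroup, $H=\mathbf H(\mathbb R)$ without compact factors, with Lie algebra $\mathfrak h=\bigoplus_i\mathfrak h_i$ (simple ideals), and $\mathfrak r$ is an $\mathrm{Ad}(H)$-invariant complement, $\mathfrak g=\mathfrak h\oplus\mathfrak r$. $\mathbf a\in\mathfrak h$ is a semisimple element, $\mathrm{ad}\,\mathbf a$ diagonalizable over $\mathbb R$, whose projection to each simple ideal $\mathfrak h_i$ of $\mathfrak h$ is nonzero. *)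

(* Finite-dimensional real Lie algebras, modelled on a
   vectType V with a bracket br : V -> V -> V; subspaces are {vspace V}. *)
From HB Require Import structures.
From mathcomp Require Import all_boot all_order all_algebra.
Set Implicit Arguments. Unset Strict Implicit. Unset Printing Implicit Defensive.
Import Order.TTheory GRing.Theory Num.Theory.
Local Open Scope ring_scope.


Section Lie.
Variables (R : fieldType) (V : vectType R) (br : V -> V -> V).

Definition lie_algebra : Prop :=
  [/\ (forall (c : R) x y z, br (c *: x + y) z = c *: br x z + br y z),
      (forall (c : R) x y z, br z (c *: x + y) = c *: br z x + br z y),
      (forall x, br x x = 0) &
      (forall x y z, br x (br y z) + br y (br z x) + br z (br x y) = 0)].

Definition bracket_sp (U W : {vspace V}) : {vspace V} :=
  (\sum_(i < \dim U) \sum_(j < \dim W) <[br (vbasis U)`_i (vbasis W)`_j]>)%VS.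

Definition subalgebra (L : {vspace V}) : Prop :=
  forall x y, x \in L -> y \in L -> br x y \in L.

Definition ideal_in (L I : {vspace V}) : Prop :=
  (I <= L)%VS /\ forall x y, x \in L -> y \in I -> br x y \in I.

Definition derived_series (I : {vspace V}) (k : nat) : {vspace V} :=
  iter k (fun W => bracket_sp W W) I.

Definition lie_solvable (I : {vspace V}) : Prop :=
  exists k, derived_series I k = 0%VS.

Definition lie_semisimple (L : {vspace V}) : Prop :=
  subalgebra L /\ forall I, ideal_in L I -> lie_solvable I -> I = 0%VS.

Definition lie_simple (L : {vspace V}) : Prop :=
  [/\ subalgebra L, bracket_sp L L != 0%VS &
      forall J, ideal_in L J -> J = 0%VS \/ J = L].

Definition simple_ideal_decomp (L : {vspace V}) (n : nat)
    (Ls : 'I_n -> {vspace V}) : Prop :=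
  [/\ forall i, ideal_in L (Ls i) /\ lie_simple (Ls i),
      directv (\sum_(i < n) Ls i) &
      (\sum_(i < n) Ls i)%VS = L].

Definition proj_on (n : nat) (Ls : 'I_n -> {vspace V}) (i : 'I_n) : 'End(V) :=
  daddv_pi (Ls i) (\sum_(j < n | j != i) Ls j)%VS.

Definition ad_invariant (L W : {vspace V}) : Prop :=
  forall x w, x \in L -> w \in W -> br x w \in W.

Definition irreducible_rep (L W : {vspace V}) : Prop :=
  [/\ W != 0%VS, ad_invariant L W &
      forall U, (U <= W)%VS -> ad_invariant L U -> U = 0%VS \/ U = W].

Definition ad_diagonalizable (x : V) : Prop :=
  exists (b : (\dim (fullv : {vspace V})).-tuple V)
         (lam : 'I_(\dim (fullv : {vspace V})) -> R),
    basis_of fullv b /\ forall k, br x (tnth b k) = lam k *: tnth b k.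

Definition killing (U : {vspace V}) (x y : V) : R :=
  \sum_(k < \dim U) coord (vbasis U) k (br x (br y (vbasis U)`_k)).

End Lie.

(* a (lie_simple) real Lie algebra U is non-compact: its Killing form
   is not negative definite *)
Definition noncompact (R : realFieldType) (V : vectType R) (br : V -> V -> V)
    (U : {vspace V}) : Prop :=
  exists x, [/\ x \in U, x != 0 & 0 <= killing br U x x].

(* If the g_i-component of a vanished, a would lie in the complementary ideal
   C = (+)_(j <> i) g_j.  Each simple ideal h_k of h meets C in an ideal of h_k;
   were it 0, the h_k-component of a (nonzero by hypothesis) would be central in
   h_k, impossible for a simple algebra.  Hence h <= C, so h commutes with g_i
   (disjoint ideals commute) and the r-component u of a nonzero element of g_i is
   a nonzero h-fixed vector.  Irreducibility forces r = R u, which makes r a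
   nonzero central ideal of the semisimple algebra g: a contradiction. *)
From mathcomp Require Import all_boot all_algebra.
From mathcomp Require Import reals.
Import GRing.Theory.
Local Open Scope ring_scope.

Set Implicit Arguments.
Unset Strict Implicit.

Section LieAlgebra.
Variables (R : fieldType) (V : vectType R) (br : V -> V -> V).
Hypothesis lieV : lie_algebra br.

Lemma brDl x y z : br (x + y) z = br x z + br y z.
Proof. by case: (lieV) => brl _ _ _; rewrite -[x]scale1r brl !scale1r. Qed.

Lemma brDr x y z : br z (x + y) = br z x + br z y.
Proof. by case: (lieV) => _ brr _ _; rewrite -[x]scale1r brr !scale1r. Qed.

Lemma br0l z : br 0 z = 0.
Proof. by apply: (addrI (br 0 z)); rewrite -brDl !addr0. Qed.

Lemma br0r z : br z 0 = 0.
Proof. by apply: (addrI (br z 0)); rewrite -brDr !addr0. Qed.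

Lemma brZl c x z : br (c *: x) z = c *: br x z.
Proof. by case: (lieV) => brl _ _ _; rewrite -[c *: x]addr0 brl br0l addr0. Qed.

Lemma brZr c x z : br z (c *: x) = c *: br z x.
Proof. by case: (lieV) => _ brr _ _; rewrite -[c *: x]addr0 brr br0r addr0. Qed.

Lemma brxx x : br x x = 0.
Proof. by case: (lieV). Qed.

Lemma br_antisym x y : br x y = - br y x.
Proof.
apply/eqP; rewrite -addr_eq0.
by have := brxx (x + y); rewrite brDl !brDr !brxx add0r addr0 => ->.
Qed.

Definition lie_abelian (L : {vspace V}) : Prop :=
  forall x y, x \in L -> y \in L -> br x y = 0.

Lemma bracket_sp_abelian L : lie_abelian L -> bracket_sp br L L = 0%VS.
Proof.
move=> abL; apply: big1 => i _; apply: big1 => j _.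
by rewrite abL ?vline0 // vbasis_mem // mem_nth // size_tuple.
Qed.

Lemma lie_abelian_solvable L : lie_abelian L -> lie_solvable br L.
Proof. by exists 1%N; apply: bracket_sp_abelian. Qed.

Lemma lie_abelian_line u : lie_abelian <[u]>.
Proof.
by move=> _ _ /vlineP[c ->] /vlineP[d ->]; rewrite brZl brZr brxx !scaler0.
Qed.

Lemma lie_simple_nonabelian L : lie_simple br L -> ~ lie_abelian L.
Proof. by case=> _ brL _ /bracket_sp_abelian brL0; rewrite brL0 eqxx in brL. Qed.

Lemma lie_simple_neq0 L : lie_simple br L -> L != 0%VS.
Proof.
move=> /lie_simple_nonabelian nabL; apply/eqP => L0; apply: nabL.
by rewrite L0 => x y; rewrite memv0 => /eqP-> _; rewrite br0l.
Qed.

Lemma lie_simple_center L y :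
  lie_simple br L -> y \in L -> (forall x, x \in L -> br x y = 0) -> y = 0.
Proof.
move=> simL yL yc; have [_ _ idealsL] := simL.
have : ideal_in br L <[y]>.
  split; first by rewrite -memvE.
  by move=> x _ xL /vlineP[c ->]; rewrite brZr yc // scaler0 mem0v.
case/idealsL => [y0 | y_spans].
  by apply/eqP; rewrite -memv0 -y0 memv_line.
by case: (lie_simple_nonabelian simL); rewrite -y_spans; apply: lie_abelian_line.
Qed.

Lemma lie_semisimple_center L I :
  lie_semisimple br L -> (I <= L)%VS ->
  (forall x y, x \in L -> y \in I -> br x y = 0) -> I = 0%VS.
Proof.
move=> [_ ssL] IL Ic; apply: ssL; first by split=> // x y xL yI; rewrite Ic ?mem0v.
by apply: lie_abelian_solvable => x y xI yI; apply: Ic (subvP IL x xI) yI.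
Qed.

Lemma ad_invariant_sum (I : finType) (P : pred I) L (Ls : I -> {vspace V}) :
  (forall j, P j -> ad_invariant br L (Ls j)) ->
  ad_invariant br L (\sum_(j | P j) Ls j)%VS.
Proof.
move=> Lsinv x y xL; elim/big_rec: _ y => [|j W Pj IH] y.
  by rewrite memv0 => /eqP->; rewrite br0r mem0v.
by case/memv_addP => u uj [w wW ->]; rewrite brDr memv_add ?IH ?Lsinv.
Qed.

Lemma br_ideal_cap0 L I J x y :
  ideal_in br L I -> ideal_in br L J -> (I :&: J = 0)%VS ->
  x \in I -> y \in J -> br x y = 0.
Proof.
move=> [IL Iinv] [JL Jinv] IJ0 xI yJ.
apply/eqP; rewrite -memv0 -IJ0 memv_cap Jinv ?(subvP IL) //=.
by rewrite br_antisym rpredN Iinv ?(subvP JL).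
Qed.

Lemma simple_ideal_capv (S C : {vspace V}) :
  lie_simple br S -> ad_invariant br S C -> (S :&: C = 0)%VS \/ (S <= C)%VS.
Proof.
move=> [subS _ idealsS] Cinv.
have : ideal_in br S (S :&: C).
  split=> [|x y xS /memv_capP[yS yC]]; first exact: capvSl.
  by rewrite memv_cap subS ?Cinv.
by case/idealsS => [-> | SC]; [left | right; apply/capv_idPl].
Qed.

Section Decomposition.
Variables (L : {vspace V}) (n : nat) (Ls : 'I_n -> {vspace V}).

Lemma ideal_in_compl i :
  (forall j, ideal_in br L (Ls j)) -> ideal_in br L (\sum_(j < n | j != i) Ls j).
Proof.
move=> Lsideal; split; last by apply: ad_invariant_sum => j _; case: (Lsideal j).
by apply/subv_sumP => j _; case: (Lsideal j).
Qed.

Lemma proj_on_eq0_memv_compl i x :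
  directv (\sum_(j < n) Ls j) -> x \in (\sum_(j < n) Ls j)%VS ->
  proj_on Ls i x = 0 -> x \in (\sum_(j < n | j != i) Ls j)%VS.
Proof.
move=> /directv_sumP/(_ i isT) LsC0; rewrite (bigD1 i) //= /proj_on.
by move=> /(daddv_pi_add LsC0) xE xi0; rewrite -xE xi0 add0r memv_pi.
Qed.

Lemma subv_of_proj_on_neq0 a (C : {vspace V}) :
  simple_ideal_decomp br L Ls -> a \in L -> (forall k, proj_on Ls k a != 0) ->
  a \in C -> ad_invariant br L C -> (L <= C)%VS.
Proof.
move=> [Lssimple Lsdir Lssum] aL aproj aC Cinv.
rewrite -Lssum; apply/subv_sumP => k _; have [[kL _] simk] := Lssimple k.
have [k_sub _ _] := simk.
have [kC0 | //] := simple_ideal_capv simk (fun x y xk => Cinv x y (subvP kL x xk)).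
set D := (\sum_(j < n | j != k) Ls j)%VS.
have kD0 : (Ls k :&: D = 0)%VS by move/directv_sumP: Lsdir => /(_ k isT).
have : a \in (\sum_(j < n) Ls j)%VS by rewrite Lssum.
rewrite (bigD1 k) //= => /(daddv_pi_add kD0) aE.
have D_ideal : ideal_in br L D by apply: ideal_in_compl => j; case: (Lssimple j).
have ak_k : proj_on Ls k a \in Ls k by apply: memv_pi.
case/negP: (aproj k); apply/eqP; apply: (lie_simple_center simk ak_k) => x xk.
have xaD : br x (daddv_pi D (Ls k) a) = 0.
  by apply: br_ideal_cap0 (Lssimple k).1 D_ideal kD0 xk (memv_pi _ _ _).
apply/eqP; rewrite -memv0 -kC0 memv_cap k_sub //=.
by have := Cinv x a (subvP kL x xk) aC; rewrite -{1}aE brDr xaD addr0.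
Qed.

End Decomposition.

Section Complement.
Variables (h r : {vspace V}).

Lemma complement_component_central g :
  subalgebra br h -> ad_invariant br h r -> directv (h + r) ->
  g \in (h + r)%VS -> g \notin h -> (forall x, x \in h -> br x g \in h) ->
  exists u, [/\ u \in r, u != 0 & forall x, x \in h -> br x u = 0].
Proof.
move=> h_sub r_inv /directv_addP hr0 ghr g_h gh.
have rh0 : (r :&: h = 0)%VS by rewrite capvC.
move: ghr; rewrite addvC => /(daddv_pi_add rh0) gE.
set u := daddv_pi r h g in gE; set w := daddv_pi h r g in gE.
have [u_r w_h] : u \in r /\ w \in h by split; apply: memv_pi.
exists u; split=> // [|x xh].
  by apply: contraNneq g_h => u0; rewrite -gE u0 add0r.
apply/eqP; rewrite -memv0 -rh0 memv_cap r_inv //=.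
have -> : br x u = br x g - br x w by rewrite -gE brDr addrK.
by rewrite rpredB ?gh ?h_sub.
Qed.

Lemma irreducible_line u :
  irreducible_rep br h r -> u \in r -> u != 0 ->
  (forall x, x \in h -> br x u = 0) -> r = <[u]>%VS.
Proof.
move=> [_ _ r_irr] u_r u0 uc.
case: (r_irr <[u]>%VS) => [||u_line0 | //]; first by rewrite -memvE.
  by move=> x _ xh /vlineP[c ->]; rewrite brZr uc // scaler0 mem0v.
by case/negP: u0; rewrite -memv0 -u_line0 memv_line.
Qed.

Lemma line_complement_central u :
  (h + r)%VS = fullv -> r = <[u]>%VS -> (forall x, x \in h -> br x u = 0) ->
  forall x y, y \in r -> br x y = 0.
Proof.
move=> hr ru uc x y; rewrite ru => /vlineP[c ->].
have : x \in (h + r)%VS by rewrite hr memvf.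
case/memv_addP => x1 x1h [x2 + ->]; rewrite ru => /vlineP[d ->].
by rewrite brDl brZr uc // brZl brZr brxx !scaler0 addr0.
Qed.

End Complement.

End LieAlgebra.

Theorem lemma2p5 (R : realType) (V : vectType R) (br : V -> V -> V)
    (h r : {vspace V}) (n m : nat)
    (gs : 'I_n -> {vspace V}) (hs : 'I_m -> {vspace V}) (a : V) :
  lie_algebra br ->
  lie_semisimple br fullv ->
  simple_ideal_decomp br fullv gs ->
  subalgebra br h ->
  lie_semisimple br h ->
  simple_ideal_decomp br h hs ->
  (forall k, noncompact br (hs k)) ->
  directv (h + r)%VS ->
  (h + r)%VS = fullv ->
  ad_invariant br h r ->
  a \in h ->
  ad_diagonalizable br a ->
  (forall k, proj_on hs k a != 0) ->
  irreducible_rep br h r ->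
  forall i, proj_on gs i a != 0.
Proof.
move=> lieV ss [gs_simple gs_dir gs_sum] h_sub _ hs_decomp _ hr_dir hr_full
  r_inv a_h _ a_proj r_irr i; apply/negP => /eqP a_gi0.
set C := (\sum_(j < n | j != i) gs j)%VS.
have C_ideal : ideal_in br fullv C :=
  ideal_in_compl lieV i (fun j => (gs_simple j).1).
have giC0 : (gs i :&: C = 0)%VS by move/directv_sumP: gs_dir => /(_ i isT).
have a_C : a \in C by apply: proj_on_eq0_memv_compl; rewrite ?gs_sum ?memvf.
have h_C : (h <= C)%VS := subv_of_proj_on_neq0 lieV hs_decomp a_h a_proj a_C
  (fun x y _ => C_ideal.2 x y (memvf x)).
set g := vpick (gs i).
have g_gi : g \in gs i by apply: memv_pick.
have g_h : g \notin h.
  apply: contra (lie_simple_neq0 lieV (gs_simple i).2) => /(subvP h_C) g_C.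
  by rewrite -vpick0 -memv0 -giC0 memv_cap g_gi.
have g_central x : x \in h -> br x g \in h.
  move=> /(subvP h_C) x_C.
  by rewrite (br_ideal_cap0 lieV C_ideal (gs_simple i).1 _ x_C g_gi) ?mem0v // capvC.
have g_hr : g \in (h + r)%VS by rewrite hr_full memvf.
have [u [u_r u0 u_central]] :=
  complement_component_central lieV h_sub r_inv hr_dir g_hr g_h g_central.
have r_u := irreducible_line lieV r_irr u_r u0 u_central.
have [r_neq0 _ _] := r_irr; case/negP: r_neq0; apply/eqP.
apply: (lie_semisimple_center ss (subvf r)) => x y _.
exact: (line_complement_central lieV hr_full r_u u_central).
Qed.
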